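(* Let $F$ and $G$ be finite nonempty sets of linear (affine) functions $\mathbb{R}\to\mathbb{R}$, and let $H=\{f\circ g : f\in F, g\in G\}$. For a finite set $S$ of such functions write $S_\downarrow(x)=\min_{f\in S}f(x)$ and $S_\uparrow(x)=\max_{f\in S}f(x)$. Then $H_\downarrow(x)=\min\{F_\downarrow(G_\downarrow(x)),F_\downarrow(G_\uparrow(x))\}$, $H_\uparrow(x)=\max\{F_\uparrow(G_\downarrow(x)),F_\uparrow(G_\uparrow(x))\}$, $p(H_\downarrow)\le 4p(F_\downarrow)+2p(G_\downarrow)+2p(G_\uparrow)$, and $p(H_\uparrow)\le 4p(F_\uparrow)+2p(G_\downarrow)+2p(G_\uparrow)$.
   Context: For a piecewise linear function $f:\mathbb{R}\to\mathbb{R}$, $p(f)$ denotes its number of (maximal linear) pieces. ''Linear function'' means a function of the form $x\mapsto ax+b$. *)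

From Stdlib Require Import Reals Lra List Sorted ClassicalEpsilon.
Import ListNotations.
Open Scope R_scope.

Definition affine (f : R -> R) : Prop := exists a b : R, forall x, f x = a * x + b.

Definition affine_on (f : R -> R) (I : R -> Prop) : Prop :=
  exists a b : R, forall x, I x -> f x = a * x + b.

(* f is piecewise linear with (at most) n pieces: there are breakpoints
   b_0 < b_1 < ... < b_{n-2} such that f is affine on each of the n intervals
   (-oo, b_0], [b_0, b_1], ..., [b_{n-2}, +oo). *)
Definition has_pieces (f : R -> R) (n : nat) : Prop :=
  exists l : list R, S (length l) = n /\ Sorted Rlt l /\
    forall i : nat, (i <= length l)%nat ->
      affine_on f (fun x => (i = 0%nat \/ nth (i - 1) l 0 <= x) /\
                            (i = length l \/ x <= nth i l 0)).

(* p(f): the number of maximal linear pieces = the least such n. *)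
Definition npieces (f : R -> R) : nat :=
  epsilon (inhabits 0%nat)
    (fun n => has_pieces f n /\ forall m, has_pieces f m -> (n <= m)%nat).

Definition lmin (l : list R) : R :=
  match l with [] => 0 | x :: t => fold_right Rmin x t end.
Definition lmax (l : list R) : R :=
  match l with [] => 0 | x :: t => fold_right Rmax x t end.

Definition Sdown (S : list (R -> R)) (x : R) : R := lmin (map (fun f => f x) S).
Definition Sup (S : list (R -> R)) (x : R) : R := lmax (map (fun f => f x) S).

Definition compset (F G : list (R -> R)) : list (R -> R) :=
  map (fun fg => fun x => (fst fg) ((snd fg) x)) (list_prod F G).

From Stdlib Require Import Reals List.
From Stdlib Require Import Lra Lia Sorted.
From Stdlib Require Import Classical ClassicalEpsilon FunctionalExtensionality PropExtensionality.
Import ListNotations.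
Open Scope R_scope.

(* Each f in F is affine, so over the interval [G_down x, G_up x] containing all g x it is
   extremal at an endpoint; this gives both formulas, the one for H_up being the one for
   H_down applied to -F.

   For the piece count, u = F_down o G_down can only break at a breakpoint of G_down or
   where G_down crosses the level of a breakpoint of F_down.  A concave G_down crosses each
   level at most twice, so p(u) <= p(G_down) + 2 p(F_down) - 2, and likewise for
   v = F_down o G_up with G_up convex.  Since H_down = min(u, v) is concave, on each piece
   of u the set where u = H_down is an interval, and similarly for v; these p(u) + p(v)
   intervals cover R and H_down is affine on each of them, so the continuous function
   H_down has at most p(u) + p(v) + 1 pieces. *)

(** * Lower and upper envelopes *)

Lemma fold_Rmin_spec (t : list R) (x : R) :
  In (fold_right Rmin x t) (x :: t) /\ forall y, In y (x :: t) -> fold_right Rmin x t <= y.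
Proof.
  induction t as [|z t [IHin IHle]]; simpl.
  - split; [left; reflexivity | intros y [<- | []]; lra].
  - set (m := fold_right Rmin x t) in *.
    pose proof (Rmin_l z m). pose proof (Rmin_r z m).
    split.
    + unfold Rmin; destruct (Rle_dec z m); [simpl; auto|].
      destruct IHin as [<- | Hm]; simpl; auto.
    + intros y [<- | [<- | Hy]]; [specialize (IHle x (or_introl eq_refl)) | |
                                  specialize (IHle y (or_intror Hy))]; lra.
Qed.

Lemma lmin_spec (l : list R) :
  l <> [] -> In (lmin l) l /\ forall y, In y l -> lmin l <= y.
Proof. destruct l as [|x t]; [congruence | intros _; apply fold_Rmin_spec]. Qed.

Lemma lmax_opp (l : list R) : lmax l = - lmin (map Ropp l).
Proof.
  destruct l as [|x t]; simpl; [lra|].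
  induction t as [|y t IH]; simpl; [lra|].
  rewrite IH, Ropp_Rmin, !Ropp_involutive. reflexivity.
Qed.

Lemma Sdown_le (S : list (R -> R)) (f : R -> R) (x : R) : In f S -> Sdown S x <= f x.
Proof.
  intros Hf. destruct (lmin_spec (map (fun f => f x) S)) as [_ Hle].
  - destruct S; [destruct Hf | discriminate].
  - apply Hle, (in_map (fun f => f x)), Hf.
Qed.

Lemma Sdown_attained (S : list (R -> R)) (x : R) :
  S <> [] -> exists f, In f S /\ Sdown S x = f x.
Proof.
  intros HS. destruct (lmin_spec (map (fun f => f x) S)) as [Hin _].
  - intros E. apply HS, map_eq_nil with (f := fun f => f x), E.
  - apply in_map_iff in Hin. destruct Hin as [f [Ef Hf]]. exists f. auto.
Qed.

Lemma Sdown_same_members (S T : list (R -> R)) :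
  (forall f, In f S <-> In f T) -> Sdown S = Sdown T.
Proof.
  intros Hmem. apply functional_extensionality. intros x.
  destruct S as [|f S].
  - destruct T as [|g T]; [reflexivity|].
    destruct (proj2 (Hmem g) (or_introl eq_refl)).
  - assert (HT : T <> []) by (intros ->; apply (Hmem f), in_eq).
    destruct (Sdown_attained (f :: S) x) as [g [Hg Eg]]; [discriminate|].
    destruct (Sdown_attained T x HT) as [k [Hk Ek]].
    apply Rle_antisym; [rewrite Ek | rewrite Eg]; apply Sdown_le, Hmem; assumption.
Qed.

Definition negf (f : R -> R) : R -> R := fun x => - f x.

Lemma map_negf_nonempty (S : list (R -> R)) : S <> [] -> map negf S <> [].
Proof. intros HS E. apply HS, map_eq_nil with (f := negf), E. Qed.

Lemma negf_affine (S : list (R -> R)) : Forall affine S -> Forall affine (map negf S).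
Proof.
  intros AS. apply Forall_map. eapply Forall_impl; [|exact AS].
  intros f [a [b Hf]]. exists (-a), (-b). intros y. unfold negf. rewrite Hf. ring.
Qed.

Lemma Sup_negf (S : list (R -> R)) (x : R) : Sup S x = - Sdown (map negf S) x.
Proof. unfold Sup, Sdown. rewrite lmax_opp, !map_map. reflexivity. Qed.

Lemma Sup_eq_opp_Sdown (S : list (R -> R)) : Sup S = (fun x => - Sdown (map negf S) x).
Proof. apply functional_extensionality. apply Sup_negf. Qed.

Lemma Sup_ge (S : list (R -> R)) (f : R -> R) (x : R) : In f S -> f x <= Sup S x.
Proof.
  intros Hf. rewrite Sup_negf.
  pose proof (Sdown_le (map negf S) (negf f) x (in_map negf S f Hf)). unfold negf in *. lra.
Qed.

Lemma Sup_attained (S : list (R -> R)) (x : R) :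
  S <> [] -> exists f, In f S /\ Sup S x = f x.
Proof.
  intros HS. destruct (Sdown_attained (map negf S) x) as [f [Hf E]];
    [apply map_negf_nonempty, HS|].
  apply in_map_iff in Hf. destruct Hf as [g [<- Hg]].
  exists g. split; [exact Hg|]. rewrite Sup_negf, E. unfold negf. lra.
Qed.

(** * Envelopes of compositions *)

Lemma In_compset (F G : list (R -> R)) (h : R -> R) :
  In h (compset F G) <-> exists f g, In f F /\ In g G /\ h = (fun x => f (g x)).
Proof.
  unfold compset. rewrite in_map_iff. split.
  - intros [[f g] [<- Hfg]]. apply in_prod_iff in Hfg. exists f, g. simpl. tauto.
  - intros [f [g [Hf [Hg ->]]]]. exists (f, g). split; [reflexivity | apply in_prod; auto].
Qed.

Lemma compset_nonempty (F G : list (R -> R)) : F <> [] -> G <> [] -> compset F G <> [].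
Proof.
  destruct F as [|f F], G as [|g G]; try congruence. intros _ _ E.
  assert (Hin : In (fun x => f (g x)) (compset (f :: F) (g :: G))).
  { apply In_compset. exists f, g. split; [apply in_eq | split; [apply in_eq | reflexivity]]. }
  rewrite E in Hin. destruct Hin.
Qed.

Lemma compset_affine (F G : list (R -> R)) :
  Forall affine F -> Forall affine G -> Forall affine (compset F G).
Proof.
  rewrite !Forall_forall. intros AF AG h Hh.
  apply In_compset in Hh. destruct Hh as [f [g [Hf [Hg ->]]]].
  destruct (AF f Hf) as [a [b Ha]], (AG g Hg) as [c [d Hc]].
  exists (a * c), (a * d + b). intros x. rewrite Ha, Hc. ring.
Qed.

Lemma affine_ge_Rmin (f : R -> R) (p q y : R) :
  affine f -> p <= y <= q -> Rmin (f p) (f q) <= f y.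
Proof.
  intros [a [b Hf]] Hy. rewrite !Hf. unfold Rmin.
  destruct (Rle_dec _ _); destruct (Rle_dec 0 a); nra.
Qed.

Lemma Sdown_compset (F G : list (R -> R)) (x : R) :
  F <> [] -> G <> [] -> Forall affine F ->
  Sdown (compset F G) x = Rmin (Sdown F (Sdown G x)) (Sdown F (Sup G x)).
Proof.
  intros HF HG AF. rewrite Forall_forall in AF.
  destruct (Sdown_attained G x HG) as [g1 [Hg1 E1]].
  destruct (Sup_attained G x HG) as [g2 [Hg2 E2]].
  destruct (Sdown_attained F (Sdown G x) HF) as [f1 [Hf1 E3]].
  destruct (Sdown_attained F (Sup G x) HF) as [f2 [Hf2 E4]].
  apply Rle_antisym.
  - assert (Hf1g1 : In (fun x => f1 (g1 x)) (compset F G)) by (apply In_compset; eauto 6).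
    assert (Hf2g2 : In (fun x => f2 (g2 x)) (compset F G)) by (apply In_compset; eauto 6).
    pose proof (Sdown_le _ _ x Hf1g1). pose proof (Sdown_le _ _ x Hf2g2).
    apply Rmin_glb; [rewrite E3, E1 | rewrite E4, E2]; assumption.
  - destruct (Sdown_attained (compset F G) x) as [h [Hh ->]]; [apply compset_nonempty; auto|].
    apply In_compset in Hh. destruct Hh as [f [g [Hf [Hg ->]]]].
    pose proof (affine_ge_Rmin f (Sdown G x) (Sup G x) (g x) (AF f Hf)
                  (conj (Sdown_le G g x Hg) (Sup_ge G g x Hg))).
    pose proof (Sdown_le F f (Sdown G x) Hf). pose proof (Sdown_le F f (Sup G x) Hf).
    unfold Rmin in *. repeat destruct (Rle_dec _ _); lra.
Qed.

Lemma Sup_compset_negf (F G : list (R -> R)) :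
  Sup (compset F G) = (fun x => - Sdown (compset (map negf F) G) x).
Proof.
  apply functional_extensionality. intros x. rewrite Sup_negf.
  rewrite (Sdown_same_members _ (compset (map negf F) G)); [reflexivity|]. intros h.
  rewrite in_map_iff, In_compset. split.
  - intros [k [<- Hk]]. apply In_compset in Hk. destruct Hk as [f [g [Hf [Hg ->]]]].
    exists (negf f), g. split; [apply in_map; exact Hf | split; [exact Hg | reflexivity]].
  - intros [nf [g [Hnf [Hg ->]]]]. apply in_map_iff in Hnf. destruct Hnf as [f [<- Hf]].
    exists (fun x => f (g x)). split; [reflexivity|]. apply In_compset. eauto.
Qed.

Lemma Sup_compset (F G : list (R -> R)) (x : R) :
  F <> [] -> G <> [] -> Forall affine F ->
  Sup (compset F G) x = Rmax (Sup F (Sdown G x)) (Sup F (Sup G x)).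
Proof.
  intros HF HG AF.
  rewrite Sup_compset_negf, Sdown_compset, Ropp_Rmin, !(Sup_negf F);
    [reflexivity | apply map_negf_nonempty | | apply negf_affine]; assumption.
Qed.

(** * Concavity and continuity of lower envelopes *)

Definition concave (h : R -> R) : Prop :=
  forall x y z, x <= y <= z -> (z - y) * h x + (y - x) * h z <= (z - x) * h y.

Definition quasiconcave (h : R -> R) : Prop :=
  forall x y z, x <= y <= z -> Rmin (h x) (h z) <= h y.

Definition quasiconvex (h : R -> R) : Prop :=
  forall x y z, x <= y <= z -> h y <= Rmax (h x) (h z).

Lemma concave_affine (f : R -> R) : affine f -> concave f.
Proof. intros [a [b Hf]] x y z _. rewrite !Hf. nra. Qed.

Lemma concave_Rmin (u v : R -> R) :
  concave u -> concave v -> concave (fun x => Rmin (u x) (v x)).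
Proof.
  intros Cu Cv x y z Hy. specialize (Cu x y z Hy). specialize (Cv x y z Hy).
  assert (Hzy : 0 <= z - y) by lra. assert (Hyx : 0 <= y - x) by lra.
  pose proof (Rmult_le_compat_l _ _ _ Hzy (Rmin_l (u x) (v x))).
  pose proof (Rmult_le_compat_l _ _ _ Hzy (Rmin_r (u x) (v x))).
  pose proof (Rmult_le_compat_l _ _ _ Hyx (Rmin_l (u z) (v z))).
  pose proof (Rmult_le_compat_l _ _ _ Hyx (Rmin_r (u z) (v z))).
  apply Rmin_case with (P := fun m => _ <= (z - x) * m); lra.
Qed.

Lemma quasiconcave_of_concave (h : R -> R) : concave h -> quasiconcave h.
Proof.
  intros Hc x y z Hy. specialize (Hc x y z Hy).
  destruct (Req_dec x z) as [<- | Hxz].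
  - replace y with x by lra. apply Rmin_l.
  - assert (Hzy : 0 <= z - y) by lra. assert (Hyx : 0 <= y - x) by lra.
    pose proof (Rmult_le_compat_l _ _ _ Hzy (Rmin_l (h x) (h z))).
    pose proof (Rmult_le_compat_l _ _ _ Hyx (Rmin_r (h x) (h z))).
    apply Rmult_le_reg_l with (z - x); lra.
Qed.

Lemma quasiconvex_opp (h : R -> R) : quasiconcave h -> quasiconvex (fun x => - h x).
Proof.
  intros Hq x y z Hy. specialize (Hq x y z Hy). rewrite <- Ropp_Rmin. lra.
Qed.

Lemma continuity_pt_affine (a b p : R) : continuity_pt (fun x => a * x + b) p.
Proof. reg. Qed.

Lemma continuity_pt_Rmin (u v : R -> R) (p : R) :
  continuity_pt u p -> continuity_pt v p -> continuity_pt (fun x => Rmin (u x) (v x)) p.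
Proof.
  intros Hu Hv.
  apply continuity_pt_locally_ext
    with (f := (fct_cte (/ 2) * ((u + v) - comp Rabs (u - v)))%F) (a := 1); [lra| |].
  - intros y _. unfold Rmin, Rabs, comp, mult_fct, minus_fct, plus_fct, fct_cte.
    destruct (Rle_dec _ _); destruct (Rcase_abs _); lra.
  - apply continuity_pt_mult; [apply continuity_pt_const; intros ? ?; reflexivity|].
    apply continuity_pt_minus; [apply continuity_pt_plus; assumption|].
    apply continuity_pt_comp; [apply continuity_pt_minus; assumption | apply Rcontinuity_abs].
Qed.

Lemma Sdown_ind (P : (R -> R) -> Prop) (S : list (R -> R)) :
  (forall f, affine f -> P f) ->
  (forall u v, P u -> P v -> P (fun x => Rmin (u x) (v x))) ->
  S <> [] -> Forall affine S -> P (Sdown S).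
Proof.
  intros Haff Hmin HS AS. destruct S as [|f S]; [congruence|].
  apply Forall_cons_iff in AS as [Af AS']. unfold Sdown. simpl. clear HS.
  induction S as [|g S IH]; simpl.
  - apply Haff, Af.
  - apply Forall_cons_iff in AS' as [Ag AS''].
    apply (Hmin g (fun x => fold_right Rmin (f x) (map (fun h => h x) S))).
    + apply Haff, Ag.
    + apply IH, AS''.
Qed.

Lemma Sdown_concave (S : list (R -> R)) : S <> [] -> Forall affine S -> concave (Sdown S).
Proof. apply Sdown_ind; [apply concave_affine | apply concave_Rmin]. Qed.

Lemma Sdown_continuous (S : list (R -> R)) (p : R) :
  S <> [] -> Forall affine S -> continuity_pt (Sdown S) p.
Proof.
  apply (Sdown_ind (fun h => continuity_pt h p)).
  - intros f [a [b Hf]]. replace f with (fun x => a * x + b).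
    + apply continuity_pt_affine.
    + apply functional_extensionality. intros x. symmetry. apply Hf.
  - intros u v. apply continuity_pt_Rmin.
Qed.

Lemma Sup_quasiconvex (S : list (R -> R)) : S <> [] -> Forall affine S -> quasiconvex (Sup S).
Proof.
  intros HS AS x y z Hy. rewrite !Sup_negf.
  apply (quasiconvex_opp (Sdown (map negf S))); [|exact Hy].
  apply quasiconcave_of_concave, Sdown_concave; [apply map_negf_nonempty | apply negf_affine];
    assumption.
Qed.

(** * Pieces and breakpoints *)

Definition piece (l : list R) (i : nat) (x : R) : Prop :=
  (i = 0%nat \/ nth (i - 1) l 0 <= x) /\ (i = length l \/ x <= nth i l 0).

Definition open_piece (l : list R) (i : nat) (x : R) : Prop :=
  (i = 0%nat \/ nth (i - 1) l 0 < x) /\ (i = length l \/ x < nth i l 0).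

Definition affine_pieces (h : R -> R) (l : list R) : Prop :=
  forall i, (i <= length l)%nat -> affine_on h (piece l i).

Definition convex (C : R -> Prop) : Prop :=
  forall x y z, C x -> C z -> x <= y <= z -> C y.

Definition no_split (Z : list R) (C : R -> Prop) : Prop :=
  forall x y z, C x -> C y -> In z Z -> ~ (x < z < y).

Definition affine_off (h : R -> R) (Z : list R) : Prop :=
  forall C, convex C -> no_split Z C -> affine_on h C.

Definition affine_cover (h : R -> R) (Cs : list (R -> Prop)) : Prop :=
  (forall C, In C Cs -> convex C /\ affine_on h C) /\ (forall x, exists C, In C Cs /\ C x).

Lemma nth_lt_of_sorted (l : list R) (j k : nat) :
  StronglySorted Rlt l -> (j < k)%nat -> (k < length l)%nat -> nth j l 0 < nth k l 0.
Proof.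
  intros Hs. revert j k. induction Hs as [|y l Hs IH Hy]; intros j k Hjk Hk; simpl in *; [lia|].
  destruct k as [|k]; [lia|]. destruct j as [|j].
  - rewrite Forall_forall in Hy. apply Hy, nth_In. lia.
  - apply IH; lia.
Qed.

Lemma nth_le_of_sorted (l : list R) (j k : nat) :
  StronglySorted Rlt l -> (j <= k)%nat -> (k < length l)%nat -> nth j l 0 <= nth k l 0.
Proof.
  intros Hs Hjk Hk. destruct (Nat.eq_dec j k) as [->|Hne]; [lra|].
  left. apply nth_lt_of_sorted; auto; lia.
Qed.

Lemma open_piece_of_notin (l : list R) (x : R) :
  ~ In x l -> exists i, (i <= length l)%nat /\ open_piece l i x.
Proof.
  induction l as [|w l IH]; intros Hx.
  - exists 0%nat. split; [reflexivity | split; left; reflexivity].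
  - destruct (Rtotal_order x w) as [Hxw | [-> | Hwx]].
    + exists 0%nat. split; [simpl; lia | split; [left | right]; auto].
    + destruct Hx. apply in_eq.
    + destruct IH as [i [Hi [Hlo Hhi]]]; [intros Hin; apply Hx, in_cons, Hin|].
      exists (S i). simpl. split; [lia|]. split.
      * right. replace (i - 0)%nat with i by lia.
        destruct i as [|i]; [exact Hwx|]. destruct Hlo as [Hlo|Hlo]; [lia|].
        replace (S i - 1)%nat with i in Hlo by lia. exact Hlo.
      * destruct Hhi as [Hhi|Hhi]; [left; simpl; lia | right; exact Hhi].
Qed.

Lemma piece_convex (l : list R) (i : nat) : convex (piece l i).
Proof.
  intros x y z [Hx1 Hx2] [Hz1 Hz2] Hy.
  split; [destruct Hx1 | destruct Hz2]; auto; right; lra.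
Qed.

Lemma piece_no_split (l : list R) (i : nat) :
  StronglySorted Rlt l -> (i <= length l)%nat -> no_split l (piece l i).
Proof.
  intros Hs Hi x y z [Hx _] [_ Hy] Hz Hxzy.
  destruct (In_nth l z 0 Hz) as [j [Hj <-]].
  destruct (Nat.lt_ge_cases j i) as [Hji | Hij].
  - destruct Hx as [Hx|Hx]; [lia|].
    pose proof (nth_le_of_sorted l j (i - 1) Hs ltac:(lia) ltac:(lia)). lra.
  - destruct Hy as [Hy|Hy]; [lia|].
    pose proof (nth_le_of_sorted l i j Hs Hij Hj). lra.
Qed.

Lemma affine_off_of_pieces (h : R -> R) (l : list R) : affine_pieces h l -> affine_off h l.
Proof.
  intros Hh C Hconv Hsplit.
  destruct (classic (exists x1 x2, C x1 /\ C x2 /\ x1 < x2))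
    as [[x1 [x2 [H1 [H2 H12]]]] | Hsmall].
  - set (m := (x1 + x2) / 2).
    assert (Hm : C m) by (apply (Hconv x1 m x2); auto; unfold m; lra).
    assert (Hml : ~ In m l) by (intros Hin; apply (Hsplit x1 x2 m); auto; unfold m; lra).
    destruct (open_piece_of_notin l m Hml) as [i [Hi [Hlo Hhi]]].
    destruct (Hh i Hi) as [a [b Hab]]. exists a, b. intros y Hy. apply Hab. split.
    + destruct (Nat.eq_dec i 0) as [|Hi0]; [left; assumption | right].
      destruct Hlo as [|Hlo]; [lia|]. apply Rnot_lt_le. intros Hyl.
      apply (Hsplit y m (nth (i - 1) l 0)); [assumption | assumption | apply nth_In; lia | lra].
    + destruct (Nat.eq_dec i (length l)) as [|Hil]; [left; assumption | right].
      destruct Hhi as [|Hhi]; [lia|]. apply Rnot_lt_le. intros Hyl.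
      apply (Hsplit m y (nth i l 0)); [assumption | assumption | apply nth_In; lia | lra].
  - destruct (classic (exists x, C x)) as [[x Hx] | Hempty].
    + exists 0, (h x). intros y Hy.
      destruct (Rtotal_order x y) as [Hxy | [<- | Hyx]]; [| ring |];
        exfalso; apply Hsmall; eauto.
    + exists 0, 0. intros y Hy. exfalso. eauto.
Qed.

Lemma insert_strictly_sorted (l : list R) (x : R) : StronglySorted Rlt l ->
  exists l', StronglySorted Rlt l' /\ (forall y, In y l' <-> In y (x :: l)) /\
             (length l' <= S (length l))%nat.
Proof.
  induction l as [|y l IH]; intros Hs.
  - exists [x]. split; [repeat constructor | split; [reflexivity | simpl; lia]].
  - apply StronglySorted_inv in Hs as [Hs Hy].
    destruct (Rtotal_order x y) as [Hxy | [<- | Hyx]].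
    + exists (x :: y :: l). split; [|split; [reflexivity | simpl; lia]].
      constructor; [constructor; assumption|]. constructor; [assumption|].
      eapply Forall_impl; [|exact Hy]. simpl. intros z Hz. lra.
    + exists (x :: l). split; [constructor; assumption|].
      split; [simpl; tauto | simpl; lia].
    + destruct (IH Hs) as [l' [Hs' [Hmem Hlen]]].
      exists (y :: l'). split; [|split; [intros z; simpl in *; rewrite Hmem; tauto | simpl; lia]].
      constructor; [assumption|]. apply Forall_forall. intros z Hz.
      apply Hmem in Hz as [<-|Hz]; [assumption|]. rewrite Forall_forall in Hy. auto.
Qed.

Lemma exists_strictly_sorted (L : list R) :
  exists l, StronglySorted Rlt l /\ (forall x, In x l <-> In x L) /\ (length l <= length L)%nat.
Proof.
  induction L as [|x L [l [Hs [Hmem Hlen]]]].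
  - exists []. split; [constructor | split; [reflexivity | simpl; lia]].
  - destruct (insert_strictly_sorted l x Hs) as [l' [Hs' [Hmem' Hlen']]].
    exists l'. split; [assumption|]. split; [|simpl; lia].
    intros y. rewrite Hmem'. simpl. rewrite Hmem. reflexivity.
Qed.

Lemma has_pieces_of_affine_off (h : R -> R) (Z : list R) :
  affine_off h Z -> exists n, (n <= S (length Z))%nat /\ has_pieces h n.
Proof.
  intros Hh. destruct (exists_strictly_sorted Z) as [l [Hs [Hmem Hlen]]].
  exists (S (length l)). split; [lia|].
  exists l. split; [reflexivity | split; [apply StronglySorted_Sorted, Hs|]].
  intros i Hi. apply Hh; [apply piece_convex|].
  intros x y z Hx Hy Hz. apply (piece_no_split l i Hs Hi x y z Hx Hy), Hmem, Hz.
Qed.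

Lemma affine_cover_of_pieces (h : R -> R) (n : nat) :
  has_pieces h n -> exists Cs, length Cs = n /\ affine_cover h Cs.
Proof.
  intros [l [En [Hsorted Hh]]].
  assert (Hs : StronglySorted Rlt l)
    by (apply Sorted_StronglySorted; [exact Rlt_trans | exact Hsorted]).
  exists (map (piece l) (seq 0 (S (length l)))).
  split; [rewrite length_map, length_seq; exact En|]. split.
  - intros C HC. apply in_map_iff in HC as [i [<- Hi]]. apply in_seq in Hi.
    split; [apply piece_convex | apply Hh; lia].
  - intros x. destruct (classic (In x l)) as [Hx | Hx].
    + destruct (In_nth l x 0 Hx) as [j [Hj Ej]].
      exists (piece l j). split; [apply in_map, in_seq; lia|]. split.
      * destruct j as [|j]; [left; reflexivity | right].
        rewrite <- Ej. apply nth_le_of_sorted; [exact Hs | lia | exact Hj].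
      * right. lra.
    + destruct (open_piece_of_notin l x Hx) as [i [Hi [Hlo Hhi]]].
      exists (piece l i). split; [apply in_map, in_seq; lia|].
      split; [destruct Hlo | destruct Hhi]; auto; right; lra.
Qed.

Lemma has_pieces_opp (h : R -> R) (n : nat) :
  has_pieces h n -> has_pieces (fun x => - h x) n.
Proof.
  intros [l [En [Hs Hh]]]. exists l. split; [exact En | split; [exact Hs|]].
  intros i Hi. destruct (Hh i Hi) as [a [b Hab]].
  exists (- a), (- b). intros x Hx. rewrite Hab by exact Hx. ring.
Qed.

Lemma npieces_opp (h : R -> R) : npieces (fun x => - h x) = npieces h.
Proof.
  assert (Hiff : forall n, has_pieces (fun x => - h x) n <-> has_pieces h n).
  { intros n. split; [|apply has_pieces_opp]. intros Hn.
    apply has_pieces_opp in Hn. replace h with (fun x => - - h x); [exact Hn|].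
    apply functional_extensionality. intros x. ring. }
  unfold npieces. f_equal. apply functional_extensionality. intros n.
  apply propositional_extensionality.
  setoid_rewrite Hiff. reflexivity.
Qed.

Lemma npieces_spec (h : R -> R) : (exists n, has_pieces h n) ->
  has_pieces h (npieces h) /\ forall m, has_pieces h m -> (npieces h <= m)%nat.
Proof.
  intros [n Hn]. unfold npieces. apply epsilon_spec.
  induction n as [n IH] using (well_founded_induction Wf_nat.lt_wf).
  destruct (classic (exists m, (m < n)%nat /\ has_pieces h m)) as [[m [Hmn Hm]] | Hmin].
  - exact (IH m Hmn Hm).
  - exists n. split; [exact Hn|]. intros m Hm.
    apply Nat.nlt_ge. intros Hmn. apply Hmin. eauto.
Qed.

Lemma npieces_le (h : R -> R) (n : nat) : has_pieces h n -> (npieces h <= n)%nat.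
Proof. intros Hn. apply (npieces_spec h); eauto. Qed.

(** * Composition with a quasi-concave or quasi-convex function *)

Definition crossing (g : R -> R) (c w : R) : Prop :=
  g w = c /\ forall x y, x < w < y -> exists s t, x < s < y /\ x < t < y /\ g s < c < g t.

Lemma crossing_between (g : R -> R) (c w1 w2 w3 : R) :
  quasiconcave g \/ quasiconvex g -> w1 < w2 < w3 ->
  g w1 = c -> crossing g c w2 -> g w3 = c -> False.
Proof.
  intros Hq Hw E1 [_ Hcross] E3.
  destruct (Hcross w1 w3) as [s [t [Hs [Ht [Hgs Hgt]]]]]; [lra|].
  destruct Hq as [Hq|Hq].
  - specialize (Hq w1 s w3 ltac:(lra)). rewrite E1, E3, Rmin_left in Hq; lra.
  - specialize (Hq w1 t w3 ltac:(lra)). rewrite E1, E3, Rmax_left in Hq; lra.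
Qed.

Lemma crossings_at_most_two (g : R -> R) (c : R) :
  quasiconcave g \/ quasiconvex g ->
  exists Z, (length Z <= 2)%nat /\ forall w, crossing g c w -> In w Z.
Proof.
  intros Hq.
  destruct (classic (exists w1 w2, w1 < w2 /\ crossing g c w1 /\ crossing g c w2))
    as [[w1 [w2 [H12 [H1 H2]]]] | Hno].
  - exists [w1; w2]. split; [simpl; lia|]. intros w Hw. simpl.
    destruct (Rtotal_order w w1) as [Hlt | [-> | Hgt]]; [| auto |].
    + destruct (crossing_between g c w w1 w2 Hq ltac:(lra) (proj1 Hw) H1 (proj1 H2)).
    + destruct (Rtotal_order w w2) as [Hlt | [-> | Hgt2]]; [| auto |].
      * destruct (crossing_between g c w1 w w2 Hq ltac:(lra) (proj1 H1) Hw (proj1 H2)).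
      * destruct (crossing_between g c w1 w2 w Hq ltac:(lra) (proj1 H1) H2 (proj1 Hw)).
  - destruct (classic (exists w1, crossing g c w1)) as [[w1 H1] | Hnone].
    + exists [w1]. split; [simpl; lia|]. intros w Hw. left.
      destruct (Rtotal_order w1 w) as [Hlt | [-> | Hgt]]; [| reflexivity |];
        exfalso; apply Hno; eauto.
    + exists []. split; [simpl; lia|]. intros w Hw. exfalso. eauto.
Qed.

Lemma crossings_of_levels (g : R -> R) (lF : list R) :
  quasiconcave g \/ quasiconvex g ->
  exists Z, (length Z <= 2 * length lF)%nat /\
            forall c w, In c lF -> crossing g c w -> In w Z.
Proof.
  intros Hq. induction lF as [|c lF [Z [HZlen HZ]]].
  - exists []. split; [simpl; lia|]. intros c w [].
  - destruct (crossings_at_most_two g c Hq) as [Zc [HZclen HZc]].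
    exists (Zc ++ Z). split; [rewrite length_app; simpl; lia|].
    intros c' w [<- | Hc'] Hw; apply in_or_app; [left; auto | right; eauto].
Qed.

Lemma convex_affine_image (C : R -> Prop) (al be : R) :
  convex C -> convex (fun y => exists t, C t /\ y = al * t + be).
Proof.
  intros Hc y1 y y2 [t1 [H1 ->]] [t2 [H2 ->]] Hy.
  destruct (Req_dec al 0) as [-> | Hal].
  - exists t1. split; [assumption | lra].
  - exists ((y - be) / al). split; [|field; exact Hal].
    assert (Ew : al * ((y - be) / al) = y - be) by (field; exact Hal).
    set (w := (y - be) / al) in *. clearbody w.
    destruct (Rle_dec t1 t2); [apply (Hc t1 w t2) | apply (Hc t2 w t1)]; auto;
      destruct (Rle_dec 0 al); split; nra.
Qed.

Lemma crossing_of_affine (g : R -> R) (C : R -> Prop) (al be t1 t2 w : R) :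
  convex C -> (forall t, C t -> g t = al * t + be) -> al <> 0 ->
  C t1 -> C t2 -> t1 < w < t2 -> crossing g (g w) w.
Proof.
  intros Hc Hg Hal H1 H2 Hw. split; [reflexivity|]. intros x y Hxy.
  pose proof (Rmax_l x t1). pose proof (Rmax_r x t1).
  pose proof (Rmin_l y t2). pose proof (Rmin_r y t2).
  pose proof (Rmax_lub_lt x t1 w ltac:(lra) ltac:(lra)).
  pose proof (Rmin_glb_lt y t2 w ltac:(lra) ltac:(lra)).
  set (s := (w + Rmax x t1) / 2) in *. set (t := (w + Rmin y t2) / 2) in *.
  assert (Cs : C s) by (apply (Hc t1 s t2); auto; unfold s; lra).
  assert (Ct : C t) by (apply (Hc t1 t t2); auto; unfold t; lra).
  assert (Cw : C w) by (apply (Hc t1 w t2); auto; lra).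
  rewrite (Hg w Cw).
  destruct (Rle_dec 0 al); [exists s, t | exists t, s];
    rewrite (Hg s Cs), (Hg t Ct); unfold s, t; repeat split; nra.
Qed.

Lemma affine_off_comp (F g : R -> R) (lF lg Z : list R) :
  affine_off F lF -> affine_off g lg ->
  (forall c w, In c lF -> crossing g c w -> In w Z) ->
  affine_off (fun x => F (g x)) (lg ++ Z).
Proof.
  intros HF Hg HZ C Hc Hsplit.
  destruct (Hg C Hc) as [al [be Hab]].
  { intros x y z Hx Hy Hz. apply Hsplit; [assumption | assumption | apply in_or_app; auto]. }
  destruct (HF (fun y => exists t, C t /\ y = al * t + be)) as [a [b HFab]].
  - apply convex_affine_image, Hc.
  - (* a breakpoint c of F strictly inside g(C) would be crossed by g at a point of C in Z *)
    intros y1 y2 c [t1 [Ht1 ->]] [t2 [Ht2 ->]] Hc' Hbetween.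
    assert (Hal : al <> 0) by (intros ->; lra).
    assert (Ew : al * ((c - be) / al) + be = c) by (field; exact Hal).
    set (w := (c - be) / al) in *. clearbody w.
    assert (Hw : Rmin t1 t2 < w < Rmax t1 t2)
      by (unfold Rmin, Rmax; destruct (Rle_dec t1 t2); destruct (Rle_dec 0 al); split; nra).
    assert (Hmin : C (Rmin t1 t2)) by (apply Rmin_case; assumption).
    assert (Hmax : C (Rmax t1 t2)) by (apply Rmax_case; assumption).
    assert (Hcw : crossing g c w).
    { replace c with (g w).
      - apply (crossing_of_affine g C al be (Rmin t1 t2) (Rmax t1 t2) w); assumption.
      - rewrite Hab; [exact Ew | apply (Hc (Rmin t1 t2) w (Rmax t1 t2)); auto; lra]. }
    apply (Hsplit (Rmin t1 t2) (Rmax t1 t2) w Hmin Hmax); [apply in_or_app; eauto | exact Hw].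
  - exists (a * al), (a * be + b). intros x Hx. rewrite Hab, HFab by eauto. ring.
Qed.

Lemma has_pieces_comp (F g : R -> R) (nF ng : nat) :
  has_pieces F nF -> has_pieces g ng -> quasiconcave g \/ quasiconvex g ->
  exists n, (n + 2 <= ng + 2 * nF)%nat /\ has_pieces (fun x => F (g x)) n.
Proof.
  intros [lF [EF [_ HF]]] [lg [Eg [_ Hg]]] Hq.
  destruct (crossings_of_levels g lF Hq) as [Z [HZlen HZ]].
  destruct (has_pieces_of_affine_off (fun x => F (g x)) (lg ++ Z)) as [n [Hn Hpieces]].
  { exact (affine_off_comp F g lF lg Z (affine_off_of_pieces F lF HF)
                             (affine_off_of_pieces g lg Hg) HZ). }
  exists n. split; [rewrite length_app in Hn; lia | exact Hpieces].
Qed.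

(** * From a finite affine cover to pieces *)

(* The points are the suprema of the cells that are bounded above by a point outside them. *)
Lemma cells_right_ends (Cs : list (R -> Prop)) :
  (forall C, In C Cs -> convex C) ->
  exists L, (length L <= length Cs)%nat /\
    forall C, In C Cs -> forall x y, C x -> ~ C y -> x <= y -> exists s, In s L /\ x <= s <= y.
Proof.
  induction Cs as [|C Cs IH]; intros Hconv.
  - exists []. split; [reflexivity | intros C []].
  - destruct IH as [L [HL Hsep]]; [intros C' HC'; apply Hconv, in_cons, HC'|].
    assert (Hub : forall x y, C x -> ~ C y -> x <= y -> forall d, C d -> d <= y).
    { intros x y Hx Hy Hxy d Hd. apply Rnot_lt_le. intros Hyd.
      apply Hy, (Hconv C (in_eq C Cs) x y d); auto; lra. }
    destruct (classic (exists x0 y0, C x0 /\ ~ C y0 /\ x0 <= y0))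
      as [[x0 [y0 [H0 [Hn0 H00]]]] | Hno].
    + destruct (completeness C) as [s [Hs_ub Hs_least]];
        [exists y0; intros d; apply (Hub x0 y0); auto | exists x0; exact H0 |].
      exists (s :: L). split; [simpl; lia|].
      intros C' [<- | HC'] x y Hx Hy Hxy.
      * exists s. split; [apply in_eq|].
        split; [apply Hs_ub, Hx | apply Hs_least; intros d; apply (Hub x y); auto].
      * destruct (Hsep C' HC' x y Hx Hy Hxy) as [s' [Hs' Hs'xy]].
        exists s'. split; [apply in_cons|]; assumption.
    + exists L. split; [simpl; lia|].
      intros C' [<- | HC'] x y Hx Hy Hxy; [exfalso; apply Hno; eauto | eauto].
Qed.

Lemma open_piece_convex (l : list R) (i : nat) : convex (open_piece l i).
Proof.
  intros x y z [Hx1 Hx2] [Hz1 Hz2] Hy.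
  split; [destruct Hx1 | destruct Hz2]; auto; right; lra.
Qed.

Lemma open_piece_notin (l : list R) (i : nat) (s : R) :
  StronglySorted Rlt l -> (i <= length l)%nat -> In s l -> ~ open_piece l i s.
Proof.
  intros Hs Hi Hsl [Hlo Hhi]. destruct (In_nth l s 0 Hsl) as [j [Hj <-]].
  destruct (Nat.lt_ge_cases j i).
  - destruct Hlo as [|Hlo]; [lia|].
    pose proof (nth_le_of_sorted l j (i - 1) Hs ltac:(lia) ltac:(lia)). lra.
  - destruct Hhi as [|Hhi]; [lia|].
    pose proof (nth_le_of_sorted l i j Hs ltac:(lia) ltac:(lia)). lra.
Qed.

Lemma open_piece_two_points (l : list R) (i : nat) :
  StronglySorted Rlt l -> (i <= length l)%nat ->
  exists x0 y0, x0 < y0 /\ open_piece l i x0 /\ open_piece l i y0.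
Proof.
  intros Hs Hi. unfold open_piece.
  destruct (Nat.eq_dec i 0) as [Hi0|Hi0]; destruct (Nat.eq_dec i (length l)) as [Hil|Hil].
  - exists 0, 1. split; [lra | tauto].
  - exists (nth i l 0 - 2), (nth i l 0 - 1). split; [lra|]. split; split; auto; right; lra.
  - exists (nth (i - 1) l 0 + 1), (nth (i - 1) l 0 + 2). split; [lra|].
    split; split; auto; right; lra.
  - pose proof (nth_lt_of_sorted l (i - 1) i Hs ltac:(lia) ltac:(lia)).
    exists ((2 * nth (i - 1) l 0 + nth i l 0) / 3), ((nth (i - 1) l 0 + 2 * nth i l 0) / 3).
    split; [lra|]. split; split; right; lra.
Qed.

Lemma affine_on_open_piece (h : R -> R) (Cs : list (R -> Prop)) (l : list R) (i : nat) :
  affine_cover h Cs ->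
  (forall C, In C Cs -> forall x y, C x -> ~ C y -> x <= y -> exists s, In s l /\ x <= s <= y) ->
  StronglySorted Rlt l -> (i <= length l)%nat ->
  exists a b, forall w, open_piece l i w -> h w = a * w + b.
Proof.
  intros [HCs Hcov] Hsep Hs Hi.
  assert (Hfwd : forall C, In C Cs -> forall x y,
            open_piece l i x -> open_piece l i y -> x <= y -> C x -> C y).
  { intros C HC x y Hx Hy Hxy HCx. apply NNPP. intros HCy.
    destruct (Hsep C HC x y HCx HCy Hxy) as [s [Hsl Hsxy]].
    apply (open_piece_notin l i s Hs Hi Hsl), (open_piece_convex l i x s y); auto. }
  destruct (open_piece_two_points l i Hs Hi) as [x0 [y0 [Hxy [Hx0 Hy0]]]].
  destruct (Hcov x0) as [C0 [HC0 HC0x]].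
  destruct (proj2 (HCs C0 HC0)) as [a [b Hab]].
  exists a, b. intros w Hw. destruct (Rle_dec x0 w) as [Hxw | Hwx].
  - apply Hab, (Hfwd C0 HC0 x0 w); auto.
  - destruct (Hcov w) as [Cw [HCw HCww]].
    destruct (proj2 (HCs Cw HCw)) as [a' [b' Hab']].
    assert (E0 : a * x0 + b = a' * x0 + b').
    { rewrite <- Hab, <- Hab'; [reflexivity | apply (Hfwd Cw HCw w x0) | ]; auto; lra. }
    assert (E1 : a * y0 + b = a' * y0 + b').
    { rewrite <- Hab, <- Hab'; [reflexivity | apply (Hfwd Cw HCw w y0) | apply (Hfwd C0 HC0 x0 y0)];
        auto; lra. }
    assert (Ea : a = a') by (apply Rmult_eq_reg_r with (y0 - x0); lra).
    subst a'. rewrite (Hab' w HCww). lra.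
Qed.

Lemma piece_approx (l : list R) (i : nat) (w : R) :
  StronglySorted Rlt l -> (i <= length l)%nat -> piece l i w ->
  exists d, 0 < d /\ ((forall t, 0 < t < d -> open_piece l i (w + t)) \/
                      (forall t, 0 < t < d -> open_piece l i (w - t))).
Proof.
  intros Hs Hi [Hlo Hhi].
  destruct (Nat.eq_dec i (length l)) as [Hil | Hil].
  - exists 1. split; [lra|]. left. intros t Ht.
    split; [destruct Hlo; [left | right; lra] | left]; assumption.
  - destruct Hhi as [|Hhi]; [lia|].
    destruct (Rlt_dec w (nth i l 0)) as [Hw | Hw].
    + exists (nth i l 0 - w). split; [lra|]. left. intros t Ht.
      split; [destruct Hlo; [left; assumption | right; lra] | right; lra].
    + destruct (Nat.eq_dec i 0) as [Hi0 | Hi0].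
      * exists 1. split; [lra|]. right. intros t Ht. split; [left; assumption | right; lra].
      * pose proof (nth_lt_of_sorted l (i - 1) i Hs ltac:(lia) ltac:(lia)).
        exists (nth i l 0 - nth (i - 1) l 0). split; [lra|]. right. intros t Ht.
        split; right; lra.
Qed.

Lemma continuity_pt_one_sided_affine (h : R -> R) (a b p d : R) :
  continuity_pt h p -> 0 < d ->
  (forall t, 0 < t < d -> h (p + t) = a * (p + t) + b) \/
  (forall t, 0 < t < d -> h (p - t) = a * (p - t) + b) ->
  h p = a * p + b.
Proof.
  intros Hc Hd Hside. apply NNPP. intros Hne.
  pose proof (continuity_pt_minus h (fun x => a * x + b) p Hc (continuity_pt_affine a b p)) as Hk.
  destruct (Hk (Rabs (h p - (a * p + b)))) as [e [He Hnear]]; [apply Rabs_pos_lt; lra|].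
  set (t := Rmin e d / 2).
  assert (Ht : 0 < t < d /\ t < e)
    by (unfold t; pose proof (Rmin_l e d); pose proof (Rmin_r e d);
        pose proof (Rmin_glb_lt e d 0 He Hd); lra).
  assert (Hx : exists x, x <> p /\ Rabs (x - p) < e /\ h x = a * x + b).
  { destruct Hside as [Hr | Hl];
      [exists (p + t); rewrite Hr by lra | exists (p - t); rewrite Hl by lra];
      (split; [lra | split; [apply Rabs_def1; lra | reflexivity]]). }
  destruct Hx as [x [Hxp [Hxe Hx]]].
  specialize (Hnear x (conj (conj I (not_eq_sym Hxp)) Hxe)).
  simpl in Hnear. unfold Rdist, minus_fct in Hnear.
  rewrite Hx, Rminus_diag, Rminus_0_l, Rabs_Ropp in Hnear. lra.
Qed.

Lemma has_pieces_of_affine_cover (h : R -> R) (Cs : list (R -> Prop)) :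
  (forall p, continuity_pt h p) -> affine_cover h Cs ->
  exists n, (n <= S (length Cs))%nat /\ has_pieces h n.
Proof.
  intros Hc Hcover.
  destruct (cells_right_ends Cs) as [L [HL Hsep]]; [intros C HC; apply (proj1 Hcover), HC|].
  destruct (exists_strictly_sorted L) as [l [Hs [Hmem Hlen]]].
  exists (S (length l)). split; [lia|].
  exists l. split; [reflexivity | split; [apply StronglySorted_Sorted, Hs|]].
  intros i Hi.
  destruct (affine_on_open_piece h Cs l i Hcover) as [a [b Hab]]; [| exact Hs | exact Hi |].
  { intros C HC x y Hx Hy Hxy. destruct (Hsep C HC x y Hx Hy Hxy) as [s [HsL Hsxy]].
    exists s. split; [apply Hmem, HsL | exact Hsxy]. }
  exists a, b. intros w Hw.
  destruct (piece_approx l i w Hs Hi Hw) as [d [Hd Hside]].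
  apply (continuity_pt_one_sided_affine h a b w d (Hc w) Hd).
  destruct Hside as [H | H]; [left | right]; intros t Ht; apply Hab, H, Ht.
Qed.

(** * Pieces of lower envelopes *)

Definition contact (h u : R -> R) (C : R -> Prop) (x : R) : Prop := C x /\ u x <= h x.

Lemma contact_cell (h u : R -> R) (C : R -> Prop) :
  concave h -> (forall x, h x <= u x) -> convex C -> affine_on u C ->
  convex (contact h u C) /\ affine_on h (contact h u C).
Proof.
  intros Hh Hhu HC [a [b Hu]]. split.
  - intros x y z [Cx Ux] [Cz Uz] Hy.
    assert (Cy : C y) by (apply (HC x y z); auto). split; [exact Cy|].
    destruct (Req_dec x z) as [<- | Hxz]; [replace y with x by lra; exact Ux|].
    specialize (Hh x y z Hy). rewrite Hu in * by assumption.
    assert ((z - y) * (a * x + b) <= (z - y) * h x) by (apply Rmult_le_compat_l; lra).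
    assert ((y - x) * (a * z + b) <= (y - x) * h z) by (apply Rmult_le_compat_l; lra).
    apply Rmult_le_reg_l with (z - x); lra.
  - exists a, b. intros x [Cx Ux]. rewrite <- Hu by assumption. specialize (Hhu x). lra.
Qed.

Lemma has_pieces_Sdown (S : list (R -> R)) :
  S <> [] -> Forall affine S -> exists n, has_pieces (Sdown S) n.
Proof.
  intros HS AS.
  destruct (has_pieces_of_affine_cover (Sdown S)
              (map (fun f => contact (Sdown S) f (fun _ => True)) S)) as [n [_ Hn]];
    [intros p; apply Sdown_continuous; assumption | | exists n; exact Hn].
  split.
  - intros D HD. apply in_map_iff in HD as [f [<- Hf]].
    rewrite Forall_forall in AS. destruct (AS f Hf) as [a [b Hab]].
    apply contact_cell.
    + apply Sdown_concave; [exact HS | apply Forall_forall, AS].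
    + intros x. apply Sdown_le, Hf.
    + intros x y z _ _ _. exact I.
    + exists a, b. intros x _. apply Hab.
  - intros x. destruct (Sdown_attained S x HS) as [f [Hf Ef]].
    exists (contact (Sdown S) f (fun _ => True)).
    split; [apply (in_map (fun f => contact (Sdown S) f (fun _ => True))), Hf|].
    split; [exact I | lra].
Qed.

Lemma has_pieces_Sup (S : list (R -> R)) :
  S <> [] -> Forall affine S -> exists n, has_pieces (Sup S) n.
Proof.
  intros HS AS. rewrite Sup_eq_opp_Sdown.
  destruct (has_pieces_Sdown (map negf S)) as [n Hn];
    [apply map_negf_nonempty, HS | apply negf_affine, AS |].
  exists n. apply has_pieces_opp, Hn.
Qed.

Lemma has_pieces_min (h u v : R -> R) (nu nv : nat) :
  (forall p, continuity_pt h p) -> concave h -> (forall x, h x = Rmin (u x) (v x)) ->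
  has_pieces u nu -> has_pieces v nv -> exists n, (n <= S (nu + nv))%nat /\ has_pieces h n.
Proof.
  intros Hc Hconc Eh Hu Hv.
  destruct (affine_cover_of_pieces u nu Hu) as [Cu [Hlu [HCu Hcovu]]].
  destruct (affine_cover_of_pieces v nv Hv) as [Cv [Hlv [HCv Hcovv]]].
  destruct (has_pieces_of_affine_cover h (map (contact h u) Cu ++ map (contact h v) Cv))
    as [n [Hn Hpieces]]; [exact Hc | |].
  - split.
    + intros D HD. apply in_app_or in HD as [HD | HD]; apply in_map_iff in HD as [C [<- HC]].
      * destruct (HCu C HC). apply contact_cell; auto. intros x. rewrite Eh. apply Rmin_l.
      * destruct (HCv C HC). apply contact_cell; auto. intros x. rewrite Eh. apply Rmin_r.
    + intros x. destruct (Rle_dec (u x) (v x)).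
      * destruct (Hcovu x) as [C [HC Cx]]. exists (contact h u C).
        split; [apply in_or_app; left; apply in_map, HC|].
        split; [exact Cx | rewrite Eh, Rmin_left; lra].
      * destruct (Hcovv x) as [C [HC Cx]]. exists (contact h v C).
        split; [apply in_or_app; right; apply in_map, HC|].
        split; [exact Cx | rewrite Eh, Rmin_right; lra].
  - exists n. split; [rewrite length_app, !length_map in Hn; lia | exact Hpieces].
Qed.

Lemma npieces_Sdown_compset (F G : list (R -> R)) :
  F <> [] -> G <> [] -> Forall affine F -> Forall affine G ->
  (npieces (Sdown (compset F G)) <=
     4 * npieces (Sdown F) + 2 * npieces (Sdown G) + 2 * npieces (Sup G))%nat.
Proof.
  intros HF HG AF AG.
  pose proof (proj1 (npieces_spec _ (has_pieces_Sdown F HF AF))) as PF.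
  pose proof (proj1 (npieces_spec _ (has_pieces_Sdown G HG AG))) as PGd.
  pose proof (proj1 (npieces_spec _ (has_pieces_Sup G HG AG))) as PGu.
  destruct (has_pieces_comp _ _ _ _ PF PGd) as [nu [Hnu Pu]];
    [left; apply quasiconcave_of_concave, Sdown_concave; assumption|].
  destruct (has_pieces_comp _ _ _ _ PF PGu) as [nv [Hnv Pv]];
    [right; apply Sup_quasiconvex; assumption|].
  assert (HH : compset F G <> []) by (apply compset_nonempty; assumption).
  assert (AH : Forall affine (compset F G)) by (apply compset_affine; assumption).
  destruct (has_pieces_min (Sdown (compset F G)) (fun x => Sdown F (Sdown G x))
              (fun x => Sdown F (Sup G x)) nu nv) as [n [Hn Pn]];
    [intros p; apply Sdown_continuous; assumption | apply Sdown_concave; assumption |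
     intros x; apply Sdown_compset; assumption | exact Pu | exact Pv |].
  pose proof (npieces_le _ _ Pn). lia.
Qed.

Theorem lemma1 (F G : list (R -> R)) :
  F <> nil -> G <> nil ->
  Forall affine F -> Forall affine G ->
  let H := compset F G in
  (forall x, Sdown H x = Rmin (Sdown F (Sdown G x)) (Sdown F (Sup G x))) /\
  (forall x, Sup H x = Rmax (Sup F (Sdown G x)) (Sup F (Sup G x))) /\
  (npieces (Sdown H) <= 4 * npieces (Sdown F) + 2 * npieces (Sdown G)
                         + 2 * npieces (Sup G))%nat /\
  (npieces (Sup H) <= 4 * npieces (Sup F) + 2 * npieces (Sdown G)
                         + 2 * npieces (Sup G))%nat.
Proof.
  intros HF HG AF AG H.
  split; [intros x; apply Sdown_compset; assumption|].
  split; [intros x; apply Sup_compset; assumption|].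
  split; [apply npieces_Sdown_compset; assumption|].
  unfold H. rewrite Sup_compset_negf, npieces_opp, (Sup_eq_opp_Sdown F), npieces_opp.
  apply npieces_Sdown_compset; [apply map_negf_nonempty | | apply negf_affine |]; assumption.
Qed.
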